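(* Let $K$ and $K'$ be two non-degenerate CMIs, with $\mathrm{can}(\mathrm{pur}(K))=(C,\langle\mathbb I_K,\mathbb I_K,P_i,1\le i\le t\rangle)$. Let $K''=R_K^{K'}$ and $\mathrm{can}(\mathrm{pur}(K''))=(C'',\langle\mathbb I_{K''},\mathbb I_{K''},P''_j,1\le j\le r\rangle)$. If $K$ implies $K'$ and $R_K^{K'}\ne(\cdot,\langle\ \rangle)$, then for any $m_1\in P''_{j_1}$ and $m_2\in P''_{j_2}$ with $1\le j_1,j_2\le r$, $j_1\ne j_2$, we have $m_1\in P_{i_1}$ and $m_2\in P_{i_2}$ for some $1\le i_1,i_2\le t$ with $i_1\ne i_2$.
   Context: Setting: $X_1,\dots,X_n$ jointly distributed discrete random variables with $H(X_i)<\infty$; distribution unspecified. $X_\alpha=(X_i,i\in\alpha)$, $X_\emptyset$ constant. A CMI is $K=(C,\langle Q_1,\dots,Q_k\rangle)$, $k\ge0$, $C\subseteq\{1,\dots,n\}$, $\langle\cdot\rangle$ an unordered multiset of subsets; valid (for a given distribution) if $\sum_iH(X_{Q_i}|X_C)-H(X_{Q_1},\dots,X_{Q_k}|X_C)=0$. Empty members may be deleted. Degenerate = valid for every distribution, written $(\cdot,\langle\ \rangle)$. ''$K$ implies $K'$'': for every joint distribution, if $K$ is valid then $K'$ is valid. $\mathrm{pur}(K)=(C,\langle Q_i\setminus C:Q_i\setminus C\ne\emptyset\rangle)$. For pure $K$: $\mathbb I_K$ = indices lying in at least two members of the collection if $k\ge2$, else $\emptyset$; $P_1,\dots,P_t$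 the nonempty sets among $Q_i\setminus\mathbb I_K$; $\mathrm{can}(K)=(\cdot,\langle\ \rangle)$ if $k\le1$, $(C,\langle\mathbb I_K,\mathbb I_K\rangle)$ if $k\ge2,\mathbb I_K\ne\emptyset,t\le1$, $(C,\langle P_1..P_t\rangle)$ if $k\ge2,\mathbb I_K=\emptyset$, $(C,\langle\mathbb I_K,\mathbb I_K,P_1..P_t\rangle)$ if $k\ge2,\mathbb I_K\ne\emptyset,t\ge2$. For general $K$, $\mathbb I_K$ is the repeated-index set of $\mathrm{pur}(K)$; general-form notation omits the copies of $\mathbb I_K$ when empty and uses $t=0$ for $(C,\langle\mathbb I_K,\mathbb I_K\rangle)$. $R_K^{K'}$: with $\mathrm{can}(\mathrm{pur}(K'))=(C',\langle\mathbb I_{K'},\mathbb I_{K'},P'_j,1\le j\le s\rangle)$, $D=\mathbb I_{K'}\setminus\mathbb I_K$ and $T_1,\dots,T_u$ the nonempty sets among $P'_j\setminus\mathbb I_K$: $R_K^{K'}=(\cdot,\langle\ \rangle)$ if $D=\emptyset,u\le1$; $(C'\setminus\mathbb I_K,\langle T_1..T_u\rangle)$ if $D=\emptyset,u\ge2$; $(C'\setminus\mathbb I_K,\langle D,D\rangle)$ if $D\ne\emptyset,u\le1$; $(C'\setminus\mathbb I_K,\langle D,D,T_1..T_u\rangle)$ if $D\ne\emptyset,u\ge2$. *)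

From HB Require Import structures.
From mathcomp Require Import all_classical all_reals all_analysis.
From mathcomp Require Import all_boot all_order all_algebra.
Set Implicit Arguments. Unset Strict Implicit. Unset Printing Implicit Defensive.
Import Order.TTheory GRing.Theory Num.Theory.
Local Open Scope ring_scope.


(* A CMI on indices 'I_n : (C, <Q_1,...,Q_k>); the multiset is a sequence,
   all operations below are invariant under permutation of it. *)
Definition CMI (n : nat) := ({set 'I_n} * seq {set 'I_n})%type.

Definition dotCMI (n : nat) : CMI n := (set0, [::]).

Definition pur n (K : CMI n) : CMI n :=
  (K.1, [seq S <- [seq Q :\: K.1 | Q <- K.2] | S != set0]).

Definition rep n (Qs : seq {set 'I_n}) : {set 'I_n} :=
  if (2 <= size Qs)%N then [set i : 'I_n | (2 <= count (fun Q : {set 'I_n} => i \in Q) Qs)%N]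
  else set0.

Definition Iset n (K : CMI n) : {set 'I_n} := rep (pur K).2.

Definition parts n (I : {set 'I_n}) (Qs : seq {set 'I_n}) : seq {set 'I_n} :=
  [seq S <- [seq Q :\: I | Q <- Qs] | S != set0].

(* can(K) for a pure K *)
Definition can n (K : CMI n) : CMI n :=
  let I := rep K.2 in
  let Ps := parts I K.2 in
  if (size K.2 <= 1)%N then dotCMI n
  else if I == set0 then (K.1, Ps)
  else if (size Ps <= 1)%N then (K.1, [:: I; I])
  else (K.1, I :: I :: Ps).

(* The sets P_1..P_t in the general-form notation
   can(pur(K)) = (C, <I_K, I_K, P_i, 1 <= i <= t>)
   (copies of I_K omitted when I_K is empty; t = 0 for (C,<I_K,I_K>)). *)
Definition canP n (K : CMI n) : seq {set 'I_n} :=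
  let Kc := can (pur K) in
  if Iset K == set0 then Kc.2 else drop 2 Kc.2.

Definition Rcmi n (K K' : CMI n) : CMI n :=
  let C' := (can (pur K')).1 in
  let IK := Iset K in
  let D := Iset K' :\: IK in
  let Ts := [seq S <- [seq P :\: IK | P <- canP K'] | S != set0] in
  let u := size Ts in
  if D == set0 then
    (if (u <= 1)%N then dotCMI n else (C' :\: IK, Ts))
  else if (u <= 1)%N then (C' :\: IK, [:: D; D])
  else (C' :\: IK, D :: D :: Ts).

(* An outcome of (X_1,...,X_n): each X_i takes values in a countable alphabet,
   w.l.o.g. nat. *)
Definition outcome (n : nat) := {ffun 'I_n -> nat}.

(* X_A = (X_i, i in A), encoded by zeroing the coordinates outside A;
   X_set0 is constant. *)
Definition proj n (A : {set 'I_n}) (x : outcome n) : outcome n :=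
  [ffun i => if i \in A then x i else 0%N].

Section Entropy.
Variable R : realType.
Variable n : nat.

Definition is_pmf (p : outcome n -> R) : Prop :=
  (forall x, 0 <= p x) /\ (\esum_(x in @classical_sets.setT (outcome n)) (p x)%:E = 1%E).

Definition marg (p : outcome n -> R) (A : {set 'I_n}) (y : outcome n) : R :=
  fine (\esum_(x in (fun x : outcome n => proj A x = y)) (p x)%:E).

(* Shannon entropy H(X_A) (natural log; ln 0 = 0), possibly +oo *)
Definition entE (p : outcome n -> R) (A : {set 'I_n}) : \bar R :=
  \esum_(y in @classical_sets.setT (outcome n)) (- (marg p A y * ln (marg p A y)))%:E.

Definition admissible (p : outcome n -> R) : Prop :=
  is_pmf p /\ forall i : 'I_n, (entE p [set i] < +oo)%E.

Definition ent (p : outcome n -> R) (A : {set 'I_n}) : R := fine (entE p A).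

Definition condEnt (p : outcome n -> R) (A C : {set 'I_n}) : R :=
  ent p (A :|: C) - ent p C.

Definition valid (p : outcome n -> R) (K : CMI n) : Prop :=
  \sum_(Q <- K.2) condEnt p Q K.1
    - condEnt p (\bigcup_(Q <- K.2) Q) K.1 = 0.

Definition degenerateCMI (K : CMI n) : Prop :=
  forall p, admissible p -> valid p K.

Definition impliesCMI (K K' : CMI n) : Prop :=
  forall p, admissible p -> valid p K -> valid p K'.

End Entropy.

From Pilot Require Import Defs.
From mathcomp Require Import all_classical all_reals all_analysis.
From mathcomp Require Import all_boot all_order all_algebra.
From mathcomp Require Import zify.
Set Implicit Arguments. Unset Strict Implicit. Unset Printing Implicit Defensive.
Import Order.TTheory GRing.Theory Num.Theory.

(* Let m1, m2 lie in different parts of can(pur(R_K^{K'})).  Unwinding the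
   definitions, m1 and m2 avoid I_K and the conditioning set of K', and at
   least two members of K' meet {m1, m2}.  Now let X_{m1} = X_{m2} be one fair
   bit and every other X_i constant: a CMI (C, <Q_1, ..., Q_k>) is valid for
   this distribution iff C meets {m1, m2} or at most one Q_i does.  So K' is
   invalid, hence so is K: C avoids {m1, m2} and two members of K meet it.
   Since m1, m2 avoid I_K, each lies in at most one member of K, so they lie
   in two distinct parts P_i. *)

Lemma count_ge2_nth (T : Type) (a : pred T) x0 (s : seq T) j1 j2 :
  (j1 < size s)%N -> (j2 < size s)%N -> j1 <> j2 ->
  a (nth x0 s j1) -> a (nth x0 s j2) -> (2 <= count a s)%N.
Proof.
wlog lt12 : j1 j2 / (j1 < j2)%N.
  move=> W h1 h2 ne a1 a2; case: (ltngtP j1 j2) => [lt12|lt21|/ne//].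
    exact: (W j1 j2).
  exact: (W j2 j1 lt21 h2 h1 (fun e => ne (esym e)) a2 a1).
move=> _ h2 _ a1 a2; rewrite -(cat_take_drop j2 s) count_cat.
have pre : (0 < count a (take j2 s))%N.
  rewrite -has_count; apply/(has_nthP x0); exists j1; last by rewrite nth_take.
  by rewrite size_takel // ltnW.
have post : (0 < count a (drop j2 s))%N.
  rewrite -has_count; apply/(has_nthP x0); exists 0%N; last by rewrite nth_drop addn0.
  by rewrite size_drop subn_gt0.
exact: leq_add pre post.
Qed.

Section Combinatorics.
Variable n : nat.
Implicit Types (X : CMI n) (A S : {set 'I_n}) (L : seq {set 'I_n})
  (a : pred {set 'I_n}) (m : 'I_n).

Local Notation owns m := (fun S : {set 'I_n} => m \in S).
Local Notation owns2 m1 m2 := (predU (owns m1) (owns m2)).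

Lemma count_parts_le a A L : (forall S, a (S :\: A) -> a S) ->
  (count a (parts A L) <= count a L)%N.
Proof.
move=> aD; rewrite count_filter count_map; apply: sub_count => S /=.
by case/andP => /aD.
Qed.

Lemma count_parts a A L : (forall S, a (S :\: A) = a S) ->
  (forall S, a S -> S != set0) -> count a (parts A L) = count a L.
Proof.
move=> aD a_nz; rewrite count_filter count_map; apply: eq_count => S /=.
by rewrite aD; apply/andb_idr => aS; apply: a_nz; rewrite aD.
Qed.

Lemma count_parts_owns A L m : m \notin A ->
  count (owns m) (parts A L) = count (owns m) L.
Proof.
move=> mA; apply: count_parts => [S|S mS]; first by rewrite in_setD (negbTE mA).
by apply/set0Pn; exists m.
Qed.

Lemma count_parts_owns2 A L m1 m2 : m1 \notin A -> m2 \notin A ->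
  count (owns2 m1 m2) (parts A L) = count (owns2 m1 m2) L.
Proof.
move=> m1A m2A; apply: count_parts => [S|S /orP[] mS].
- by rewrite /= !in_setD (negbTE m1A) (negbTE m2A).
- by apply/set0Pn; exists m1.
- by apply/set0Pn; exists m2.
Qed.

Lemma mem_parts S A L m : S \in parts A L -> m \in S ->
  m \notin A /\ has (owns m) L.
Proof.
rewrite mem_filter => /andP[_ /mapP[Q QL ->]]; rewrite in_setD => /andP[-> mQ].
by split => //; apply/hasP; exists Q.
Qed.

Lemma count_owns_rep L m : m \notin rep L -> (count (owns m) L <= 1)%N.
Proof.
rewrite /rep; case: ifP => [_|/negbT]; first by rewrite inE -ltnNge ltnS.
by rewrite -ltnNge ltnS => size_le1 _; apply: leq_trans (count_size _ _) size_le1.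
Qed.

Lemma canP_nil_or_parts X : canP X = [::] \/ canP X = parts (Iset X) (pur X).2.
Proof.
rewrite /canP /can -/(Iset X).
case: eqP => _; case: ifP => _ /=; try by [left | right].
by case: ifP => _ /=; [left | right; rewrite drop0].
Qed.

Lemma canP_parts X : (2 <= size (parts (Iset X) (pur X).2))%N ->
  canP X = parts (Iset X) (pur X).2.
Proof.
move=> size_ge2; rewrite /canP /can -/(Iset X).
have -> : (size (pur X).2 <= 1)%N = false.
  apply/negbTE; rewrite -ltnNge; apply: leq_trans size_ge2 _.
  by rewrite size_filter count_map count_size.
have [//|_] := eqVneq (Iset X) set0.
by rewrite leqNgt size_ge2 /= drop0.
Qed.

Lemma mem_canP X S m : S \in canP X -> m \in S ->
  [/\ m \notin X.1, m \notin Iset X & has (owns m) X.2].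
Proof.
case: (canP_nil_or_parts X) => -> // /mem_parts/[apply] -[mI /hasP[Q QX mQ]].
by case: (mem_parts QX mQ).
Qed.

Lemma count_canP_le X a : (forall A S, a (S :\: A) -> a S) ->
  (count a (canP X) <= count a X.2)%N.
Proof.
move=> aD; case: (canP_nil_or_parts X) => -> //.
exact: leq_trans (count_parts_le _ (aD _)) (count_parts_le _ (aD _)).
Qed.

Lemma count_owns_le1 X m : m \notin X.1 -> m \notin Iset X ->
  (count (owns m) X.2 <= 1)%N.
Proof. by move=> mC /count_owns_rep; rewrite count_parts_owns. Qed.

Lemma owns2_setD m1 m2 A S : owns2 m1 m2 (S :\: A) -> owns2 m1 m2 S.
Proof. by case/orP => /(subsetP (subsetDl S A)) mS; apply/orP; [left | right]. Qed.

Section RcmiParts.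
Variables K K' : CMI n.

Let D := Iset K' :\: Iset K.
Let Ts := parts (Iset K) (canP K').

Lemma Rcmi_cons2 : D != set0 -> exists s, (Rcmi K K').2 = [:: D, D & s].
Proof.
by rewrite /Rcmi -/D -/Ts => /negbTE->; case: ifP => _; [exists [::] | exists Ts].
Qed.

Lemma count_Rcmi_le a : ~~ a D -> (count a (Rcmi K K').2 <= count a Ts)%N.
Proof.
rewrite /Rcmi -/D -/Ts => aD.
by case: eqP => _; case: ifP => _ //=; rewrite (negbTE aD).
Qed.

Lemma mem_canP_Rcmi S m : S \in canP (Rcmi K K') -> m \in S ->
  [/\ m \notin D, m \notin Iset K & m \notin K'.1].
Proof.
move=> SR mS; have [mR mIR hasR] := mem_canP SR mS.
have le1 := count_owns_le1 mR mIR.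
have mD : m \notin D.
  apply/negP => mD; have [|s Rs] := Rcmi_cons2; first by apply/set0Pn; exists m.
  by move: le1; rewrite Rs /= mD.
have : has (owns m) Ts.
  by rewrite has_count; apply: leq_trans (count_Rcmi_le mD); rewrite -has_count.
case/hasP => P /mem_parts/[apply] -[mIK /hasP[Q QK' mQ]].
by have [] := mem_canP QK' mQ.
Qed.

Lemma Rcmi_separated j1 j2 m1 m2 :
  let Ps := canP (Rcmi K K') in
  (j1 < size Ps)%N -> (j2 < size Ps)%N -> j1 <> j2 ->
  m1 \in nth set0 Ps j1 -> m2 \in nth set0 Ps j2 ->
  [/\ m1 \notin Iset K, m2 \notin Iset K, m1 \notin K'.1, m2 \notin K'.1
    & (2 <= count (owns2 m1 m2) K'.2)%N].
Proof.
move=> Ps lt1 lt2 ne12 m1P m2P.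
have [m1D m1I m1C] := mem_canP_Rcmi (mem_nth set0 lt1) m1P.
have [m2D m2I m2C] := mem_canP_Rcmi (mem_nth set0 lt2) m2P.
split=> //; apply: leq_trans (count_canP_le _ (@owns2_setD m1 m2)).
apply: leq_trans (count_parts_le _ (@owns2_setD m1 m2 _)).
apply: leq_trans (count_Rcmi_le _); last by rewrite negb_or m1D.
apply: leq_trans (count_canP_le _ (@owns2_setD m1 m2)).
by apply: (@count_ge2_nth _ _ set0 _ _ _ lt1 lt2 ne12); rewrite /= ?m1P ?m2P ?orbT.
Qed.

End RcmiParts.

Lemma canP_separated X m1 m2 :
  m1 \notin X.1 -> m2 \notin X.1 -> m1 \notin Iset X -> m2 \notin Iset X ->
  (2 <= count (owns2 m1 m2) X.2)%N ->
  exists i1 i2, [/\ (i1 < size (canP X))%N, (i2 < size (canP X))%N, i1 <> i2,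
    m1 \in nth set0 (canP X) i1 & m2 \in nth set0 (canP X) i2].
Proof.
move=> m1C m2C m1I m2I.
set Ps := parts (Iset X) (pur X).2.
have cnt1 : count (owns m1) Ps = count (owns m1) X.2 by rewrite !count_parts_owns.
have cnt2 : count (owns m2) Ps = count (owns m2) X.2 by rewrite !count_parts_owns.
have cnt12 : count (owns2 m1 m2) Ps = count (owns2 m1 m2) X.2.
  by rewrite !count_parts_owns2.
move: (count_owns_le1 m1C m1I) (count_owns_le1 m2C m2I).
rewrite -cnt1 -cnt2 -cnt12 => le1 le2 ge2.
have -> : canP X = Ps by apply: canP_parts; apply: leq_trans ge2 (count_size _ _).
have := count_predUI (owns m1) (owns m2) Ps.
move: le1 le2 ge2; set c1 := count (owns m1) Ps; set c2 := count (owns m2) Ps.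
set c12 := count (owns2 m1 m2) Ps; set c1and2 := count _ Ps => le1 le2 ge2 UI.
have none12 : c1and2 = 0%N by lia.
have /hasP[S1 PS1 m1S1] : has (owns m1) Ps by rewrite has_count -/c1; lia.
have /hasP[S2 PS2 m2S2] : has (owns m2) Ps by rewrite has_count -/c2; lia.
exists (index S1 Ps), (index S2 Ps); rewrite !index_mem !nth_index //.
split=> // same_index; have S12 : S1 = S2.
  by rewrite -(nth_index set0 PS1) same_index nth_index.
have : has (predI (owns m1) (owns m2)) Ps.
  by apply/hasP; exists S1; rewrite //= m1S1 S12.
by rewrite has_count -/c1and2 none12.
Qed.

End Combinatorics.

Local Open Scope ring_scope.

Section EsumIndicator.
Variables (R : realType) (T : choiceType).

Lemma esum_if_eq (S : classical_sets.set T) (a : T) (c : \bar R) : (0 <= c)%E ->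
  \esum_(x in S) (if x == a then c else 0%E) = if a \in S then c else 0%E.
Proof.
move=> c_ge0; rewrite (esumID [set a]); last by move=> x _; case: eqP.
rewrite [X in (_ + X)%E]esum1 ?adde0; last by move=> x [_ /= /eqP/negbTE->].
rewrite classical_sets.setIC classical_sets.set1I.
by case: ifP => _; [rewrite esum_set1 ?eqxx | rewrite esum_set0].
Qed.

Lemma esum_if_eq2 (S : classical_sets.set T) (a b : T) (c d : \bar R) :
  (0 <= c)%E -> (0 <= d)%E ->
  \esum_(x in S) ((if x == a then c else 0%E) + (if x == b then d else 0%E))%E =
  ((if a \in S then c else 0%E) + (if b \in S then d else 0%E))%E.
Proof.
move=> c_ge0 d_ge0; rewrite esumD ?esum_if_eq // => x _; by case: eqP.
Qed.

End EsumIndicator.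

Section FairBitCopies.
Variables (R : realType) (n : nat) (M : {set 'I_n}).
Implicit Types A B : {set 'I_n}.

Definition meets (A : {set 'I_n}) : bool := ~~ [disjoint M & A].

Lemma meetsU A B : meets (A :|: B) = meets A || meets B.
Proof. by rewrite /meets -!setI_eq0 setIUr setU_eq0 negb_and. Qed.

Lemma meets_bigcup (L : seq {set 'I_n}) : meets (\bigcup_(Q <- L) Q) = has meets L.
Proof.
elim: L => [|Q L IH]; last by rewrite big_cons meetsU IH.
by rewrite big_nil /meets -setI_eq0 setI0 eqxx.
Qed.

Definition copies (b : nat) : outcome n := [ffun i => if i \in M then b else 0%N].

Definition bit_pmf (x : outcome n) : R :=
  (if x == copies 0 then 2^-1 else 0) + (if x == copies 1 then 2^-1 else 0).

Lemma proj_copies_eq A :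
  (Defs.proj A (copies 0) == Defs.proj A (copies 1)) = ~~ meets A.
Proof.
rewrite /meets negbK; apply/eqP/idP => [eq01 | MA].
  rewrite -setI_eq0; apply/eqP/setP => i; rewrite inE in_set0.
  by apply/negP => /andP[iM iA]; move/ffunP/(_ i): eq01; rewrite !ffunE iA iM.
apply/ffunP => i; rewrite !ffunE; case: ifP => // iA.
by rewrite (disjointFl MA iA).
Qed.

Lemma bit_pmfE x : (bit_pmf x)%:E =
  ((if x == copies 0 then (2^-1)%:E else 0) +
   (if x == copies 1 then (2^-1)%:E else 0))%E.
Proof. by rewrite /bit_pmf EFinD; case: eqP; case: eqP. Qed.

Lemma halfD1 : 2^-1 + 2^-1 = 1 :> R.
Proof. by rewrite [RHS](splitr 1) mul1r. Qed.

Lemma halfE_ge0 : (0 <= ((2 : R)^-1)%:E)%E.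
Proof. by rewrite lee_fin invr_ge0. Qed.

Lemma marg_bit_pmf A y : marg bit_pmf A y =
  (if Defs.proj A (copies 0) == y then 2^-1 else 0) +
  (if Defs.proj A (copies 1) == y then 2^-1 else 0).
Proof.
rewrite /marg (eq_esum (fun x _ => bit_pmfE x)) esum_if_eq2 ?halfE_ge0 //.
have in_fiber b : (copies b \in ((fun x => Defs.proj A x = y) : classical_sets.set _)) =
    (Defs.proj A (copies b) == y).
  by apply/idP/eqP => [/set_mem|/mem_set].
by rewrite !in_fiber; case: eqP; case: eqP.
Qed.

Lemma entE_bit_pmf A : entE bit_pmf A = ((meets A)%:R * ln 2)%:E.
Proof.
rewrite /entE; set a := Defs.proj A (copies 0); set b := Defs.proj A (copies 1).
have ab := proj_copies_eq A; rewrite -/a -/b in ab.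
have [MA|nMA] := boolP (meets A); last first.
  move: ab; rewrite nMA mul0r => /eqP ab; rewrite esum1 // => y _.
  rewrite marg_bit_pmf -/a -/b -ab; case: eqP => _; last by rewrite addr0 mul0r oppr0.
  by rewrite halfD1 ln1 mulr0 oppr0.
move: ab; rewrite MA => /negbT ab; set c : R := ln 2 / 2.
have c_ge0 : (0 <= c%:E)%E by rewrite lee_fin divr_ge0 // ln_ge0 // ler1n.
have half_xlnx : - (2^-1 * ln 2^-1) = c by rewrite lnV ?posrE // mulrN opprK mulrC.
rewrite (@eq_esum _ _ _ _
  (fun y => ((if y == a then c%:E else 0) + (if y == b then c%:E else 0))%E)); last first.
  move=> y _; rewrite marg_bit_pmf -/a -/b.
  have [->|ya] := eqVneq y a; first by rewrite eq_sym (negbTE ab) addr0 adde0 half_xlnx.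
  rewrite [b == y]eq_sym; have [_|yb] := eqVneq y b; first by rewrite add0r add0e half_xlnx.
  by rewrite addr0 mul0r oppr0 adde0.
rewrite esum_if_eq2 // !ifT ?mem_set // -EFinD mul1r; congr (_%:E).
by rewrite /c -splitr.
Qed.

Lemma admissible_bit_pmf : admissible bit_pmf.
Proof.
split=> [|i]; last by rewrite entE_bit_pmf ltry.
split=> [x|]; first by rewrite /bit_pmf addr_ge0 //; case: eqP; rewrite ?invr_ge0.
rewrite (eq_esum (fun x _ => bit_pmfE x)) esum_if_eq2 ?halfE_ge0 // !ifT ?mem_set //.
by rewrite -EFinD halfD1.
Qed.

Lemma ent_bit_pmf A : ent bit_pmf A = (meets A)%:R * ln 2.
Proof. by rewrite /ent entE_bit_pmf. Qed.

Lemma sum_meets (L : seq {set 'I_n}) :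
  \sum_(Q <- L) (meets Q)%:R * ln 2 = (count meets L)%:R * ln 2 :> R.
Proof.
elim: L => [|Q L IH]; first by rewrite big_nil mul0r.
by rewrite big_cons IH /= natrD mulrDl.
Qed.

Lemma valid_bit_pmf (K : CMI n) :
  valid bit_pmf K <-> meets K.1 \/ (count meets K.2 <= 1)%N.
Proof.
rewrite /valid /condEnt !ent_bit_pmf meetsU.
have [MC|nMC] := boolP (meets K.1).
  rewrite orbT subrr big1 ?subrr => [|Q _]; first by split=> // _; left.
  by rewrite ent_bit_pmf meetsU MC orbT subrr.
rewrite (eq_bigr (fun Q => (meets Q)%:R * ln 2)) => [|Q _]; last first.
  by rewrite ent_bit_pmf meetsU (negbTE nMC) orbF mul0r subr0.
rewrite sum_meets orbF mul0r subr0 meets_bigcup -mulrBl.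
have -> : (count meets K.2 <= 1)%N = (count meets K.2 == has meets K.2).
  by rewrite has_count; case: count => [|[|k]].
have ln2_neq0 : ln 2 != 0 :> R by rewrite gt_eqF // ln_gt0 // ltr1n.
split=> [/eqP|[//|/eqP->]]; last by rewrite subrr mul0r.
by rewrite mulf_eq0 (negbTE ln2_neq0) orbF subr_eq0 eqr_nat; right.
Qed.

End FairBitCopies.

Lemma meets_set2 n (m1 m2 : 'I_n) (S : {set 'I_n}) :
  meets [set m1; m2] S = (m1 \in S) || (m2 \in S).
Proof.
by rewrite /meets -setI_eq0 setIUl setU_eq0 !setI_eq0 !disjoints1 negb_and !negbK.
Qed.

Theorem mainTheorem10 (R : realType) (n : nat) (K K' : CMI n) :
  ~ degenerateCMI R K -> ~ degenerateCMI R K' ->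
  impliesCMI R K K' ->
  Rcmi K K' <> dotCMI n ->
  forall (j1 j2 : nat) (m1 m2 : 'I_n),
    (j1 < size (canP (Rcmi K K')))%N -> (j2 < size (canP (Rcmi K K')))%N ->
    j1 <> j2 ->
    m1 \in nth set0 (canP (Rcmi K K')) j1 ->
    m2 \in nth set0 (canP (Rcmi K K')) j2 ->
    exists i1 i2 : nat,
      [/\ (i1 < size (canP K))%N, (i2 < size (canP K))%N, i1 <> i2,
          m1 \in nth set0 (canP K) i1 & m2 \in nth set0 (canP K) i2].
Proof.
move=> _ _ K_K' _ j1 j2 m1 m2 lt1 lt2 ne12 m1P m2P.
have [m1I m2I m1C' m2C' count_K'] := Rcmi_separated lt1 lt2 ne12 m1P m2P.
have count_M (L : seq {set 'I_n}) : count (meets [set m1; m2]) L =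
    count (predU (fun S : {set _} => m1 \in S) (fun S : {set _} => m2 \in S)) L.
  by apply: eq_count => S; rewrite meets_set2.
have invalid_K' : ~ valid (bit_pmf R [set m1; m2]) K'.
  rewrite valid_bit_pmf // meets_set2 (negbTE m1C') (negbTE m2C') count_M.
  by case=> //=; rewrite leqNgt count_K'.
have invalid_K : ~ valid (bit_pmf R [set m1; m2]) K.
  by move=> /(K_K' _ (admissible_bit_pmf R _)).
move: invalid_K; rewrite valid_bit_pmf // meets_set2 count_M => invalid_K.
apply: canP_separated => //.
- by apply/negP => m1C; apply: invalid_K; left; rewrite m1C.
- by apply/negP => m2C; apply: invalid_K; left; rewrite m2C orbT.
- by rewrite ltnNge; apply/negP => le1; apply: invalid_K; right.
Qed.
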